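(* Any finite polyhedral complex $K$ in $\mathbb{R}^n$ is homotopy equivalent to a polyhedral complex $K'$ in $\mathbb{R}^n$ in which no cell contains a straight line, and $K$ and $K'$ have equal numbers of cells.
   Context: A polyhedral complex in $\mathbb{R}^n$ is a finite collection of closed convex polyhedra (cells), closed under taking faces, any two meeting in a common face; it is identified with the union of its cells. *)

From HB Require Import structures.
From mathcomp Require Import all_boot all_order all_algebra.
From mathcomp Require Import all_classical all_reals topology normedtype.
Set Implicit Arguments. Unset Strict Implicit. Unset Printing Implicit Defensive.
Import Order.TTheory GRing.Theory Num.Theory.
Import numFieldNormedType.Exports.
Local Open Scope classical_set_scope.
Local Open Scope ring_scope.

Section PolyDefs.
Variables (R : realType) (n : nat).
Local Notation V := 'rV[R]_n.

Definition dotp (x y : V) : R := \sum_(i < n) x ord0 i * y ord0 i.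

Definition polyhedron (P : set V) : Prop :=
  exists (m : nat) (a : 'I_m -> V) (b : 'I_m -> R),
    P = [set x | forall i, dotp (a i) x <= b i].

(* F is a (nonempty) face of the polyhedron P: the intersection of P with a
   supporting hyperplane {c.x = d} of a valid inequality c.x <= d
   (c = 0, d = 0 gives P itself). *)
Definition face_of (F P : set V) : Prop :=
  F !=set0 /\
  exists (c : V) (d : R),
    (forall x, P x -> dotp c x <= d) /\ F = P `&` [set x | dotp c x = d].

Definition polyhedral_complex (K : set (set V)) : Prop :=
  [/\ finite_set K,
      (forall P, K P -> polyhedron P /\ P !=set0),
      (forall P F, K P -> face_of F P -> K F) &
      (forall P Q, K P -> K Q ->
         P `&` Q = set0 \/ (face_of (P `&` Q) P /\ face_of (P `&` Q) Q))].

Definition underlying (K : set (set V)) : set V := \bigcup_(P in K) P.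

Definition contains_line (P : set V) : Prop :=
  exists (x v : V), v != 0 /\ forall t : R, P (x + t *: v).

Definition homotopic_on (A B : set V) (f g : V -> V) : Prop :=
  exists H : R * V -> V,
    {within @setX R V `[0, 1]%classic A, continuous H} /\
    (forall t x, `[0, 1]%classic t -> A x -> B (H (t, x))) /\
    (forall x, A x -> H (0, x) = f x) /\
    (forall x, A x -> H (1, x) = g x).

Definition homotopy_equivalent (A B : set V) : Prop :=
  exists f g : V -> V,
    [/\ {within A, continuous f} /\ {within B, continuous g},
        (forall x, A x -> B (f x)), (forall y, B y -> A (g y)),
        homotopic_on A A (g \o f) id & homotopic_on B B (f \o g) id].

End PolyDefs.

From mathcomp Require Import all_boot all_order all_algebra.
From mathcomp Require Import all_classical all_reals topology normedtype.
From mathcomp Require Import lra.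
Import numFieldNormedType.Exports.
Set Implicit Arguments. Unset Strict Implicit. Unset Printing Implicit Defensive.
Import Order.TTheory GRing.Theory Num.Theory.
Local Open Scope classical_set_scope.
Local Open Scope ring_scope.

(* The lineality space L(P) = {v | P + Rv <= P} of a nonempty polyhedron
   P = {x | a_i.x <= b_i} is the linear subspace {v | a_i.v = 0}, and every
   nonempty face of P has the same lineality space.  As two cells of a complex
   meet in a common face, all cells through a point share their lineality
   space.  Cutting each cell P with a fixed complement W(L(P)) of L(P) yields
   line-free cells that again form a complex, in bijection with K.  The
   projection onto W(L(P)) along L(P), taken cell by cell, is therefore well
   defined and continuous on |K| (a finite union of closed cells); it retracts
   |K| onto |K'|, and the straight-line homotopy to the identity moves points
   along L(P), hence never leaves their cell. *)

Lemma bounded_line_slope0 (F : realFieldType) (a s b : F) :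
  (forall t, a + t * s <= b) -> s = 0.
Proof.
move=> H; apply/eqP; apply/negPn/negP => s0.
have := H ((b - a + 1) / s); rewrite divfK //; lra.
Qed.

Section Polyhedra.
Variables (R : realType) (n : nat).
Local Notation V := 'rV[R]_n.

Lemma dotpC (x y : V) : dotp x y = dotp y x.
Proof. by apply: eq_bigr => i _; rewrite mulrC. Qed.

Lemma dotpDr (a x y : V) : dotp a (x + y) = dotp a x + dotp a y.
Proof. by rewrite /dotp -big_split; apply: eq_bigr => i _; rewrite mxE mulrDr. Qed.

Lemma dotpZr (a x : V) t : dotp a (t *: x) = t * dotp a x.
Proof. by rewrite /dotp mulr_sumr; apply: eq_bigr => i _; rewrite mxE mulrCA. Qed.

Lemma dotpNl (a x : V) : dotp (- a) x = - dotp a x.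
Proof. by rewrite /dotp -sumrN; apply: eq_bigr => i _; rewrite mxE mulNr. Qed.

Lemma mulmx_dotp k (x : V) (M : 'M[R]_(n, k)) j :
  (x *m M) ord0 j = dotp (col j M)^T x.
Proof. by rewrite dotpC !mxE; apply: eq_bigr => i _; rewrite !mxE. Qed.

Lemma dotp_mulmx (c x : V) (M : 'M[R]_n) : dotp c (x *m M) = dotp (c *m M^T) x.
Proof.
have dotpE (a y : V) : dotp a y = (a *m y^T) ord0 ord0.
  by rewrite !mxE; apply: eq_bigr => i _; rewrite mxE.
by rewrite !dotpE trmx_mul mulmxA.
Qed.

Lemma polyhedronI (P Q : set V) :
  polyhedron P -> polyhedron Q -> polyhedron (P `&` Q).
Proof.
case=> m1 [a1 [b1 ->]] [m2 [a2 [b2 ->]]].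
pose glue T (f1 : 'I_m1 -> T) (f2 : 'I_m2 -> T) i :=
  match fintype.split i with inl j => f1 j | inr j => f2 j end.
exists (m1 + m2), (glue _ a1 a2), (glue _ b1 b2).
apply/seteqP; split => x /=.
  by case=> H1 H2 i; rewrite /glue; case: (fintype.split i) => j.
move=> H; split => j.
  by have := H (unsplit (inl j)); rewrite /glue unsplitK.
by have := H (unsplit (inr j)); rewrite /glue unsplitK.
Qed.

Lemma polyhedron_kernel k (M : 'M[R]_(n, k)) :
  polyhedron [set x : V | x *m M = 0].
Proof.
pose c i := match fintype.split i with
  | inl j => (col j M)^T | inr j => - (col j M)^T end.
exists (k + k), c, (fun=> 0); apply/seteqP; split => x /=.
  move=> /rowP xM0 i; rewrite /c; case: (fintype.split i) => j;
  by rewrite ?dotpNl -mulmx_dotp xM0 mxE ?oppr0.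
move=> H; apply/rowP => j; apply/eqP; rewrite mulmx_dotp mxE eq_le.
apply/andP; split; first by have := H (unsplit (inl j)); rewrite /c unsplitK.
by have := H (unsplit (inr j)); rewrite /c unsplitK dotpNl oppr_le0.
Qed.

Lemma face_ofI (F P W : set V) :
  face_of F P -> F `&` W !=set0 -> face_of (F `&` W) (P `&` W).
Proof.
case=> _ [c [d [valid ->]]] ne; split => //; exists c, d; split.
  by move=> x [Px _]; exact: valid.
by rewrite setIAC.
Qed.

Definition lineality (P : set V) : set V :=
  [set v | forall x, P x -> forall t : R, P (x + t *: v)].

Lemma lineality_translate (P : set V) v x : lineality P v -> P (x - v) = P x.
Proof.
move=> Lv; apply/propext; split => [Pxv|Px].
  by have := Lv _ Pxv 1; rewrite scale1r subrK.
by have := Lv _ Px (-1); rewrite scaleN1r.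
Qed.

Lemma halfspaces_line_dotp0 m (a : 'I_m -> V) (b : 'I_m -> R) x0 v :
  (forall t i, dotp (a i) (x0 + t *: v) <= b i) -> forall i, dotp (a i) v = 0.
Proof.
move=> H i; apply: (bounded_line_slope0 (a := dotp (a i) x0) (b := b i)) => t.
by have := H t i; rewrite dotpDr dotpZr.
Qed.

Lemma lineality_halfspaces m (a : 'I_m -> V) (b : 'I_m -> R) v :
  (forall i, dotp (a i) v = 0) -> lineality [set x | forall i, dotp (a i) x <= b i] v.
Proof. by move=> av x Px t i; rewrite dotpDr dotpZr av mulr0 addr0; exact: Px. Qed.

Lemma lineality_of_line (P : set V) x0 v :
  polyhedron P -> (forall t, P (x0 + t *: v)) -> lineality P v.
Proof.
case=> m [a [b ->]] line; apply: lineality_halfspaces.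
exact: halfspaces_line_dotp0 line.
Qed.

Definition is_subspace (S : set V) := exists B : 'M[R]_n, forall v, S v <-> (v <= B)%MS.

Lemma lineality_subspace (P : set V) : polyhedron P -> is_subspace (lineality P).
Proof.
case=> m [a [b PE]]; have [[x0 Px0]|P0] := pselect (P !=set0); last first.
  by exists 1%:M => v; rewrite submx1; split=> // _ x Px; case: P0; exists x.
pose A := \matrix_(j < n, i < m) a i ord0 j.
have colA i : (col i A)^T = a i by apply/rowP => j; rewrite !mxE.
exists (kermx A) => v; rewrite sub_kermx; split.
  move=> Lv; apply/eqP/rowP => i; rewrite mulmx_dotp colA mxE.
  apply: (halfspaces_line_dotp0 (x0 := x0)) => t.
  by have := Lv x0 Px0 t; rewrite {1}PE; apply.
move=> /eqP/rowP vA0; rewrite PE; apply: lineality_halfspaces => i.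
by have := vA0 i; rewrite mulmx_dotp colA mxE.
Qed.

Lemma lineality_face (P F : set V) :
  polyhedron P -> face_of F P -> lineality F = lineality P.
Proof.
move=> pP [[x0 Fx0] [c [d [valid FE]]]]; subst F; case: Fx0 => Px0 cx0.
apply/seteqP; split => v Lv.
  apply: (lineality_of_line (x0 := x0)) => // t.
  by case: (Lv x0 (conj Px0 cx0) t).
move=> x [Px cx] t; split; first exact: Lv.
have cv : dotp c v = 0.
  apply: (bounded_line_slope0 (a := dotp c x) (b := d)) => s.
  by have := valid _ (Lv x Px s); rewrite dotpDr dotpZr.
by rewrite /= dotpDr dotpZr cv mulr0 addr0.
Qed.

(* [subspace_mx S] is an arbitrary matrix unless [is_subspace S]. *)
Definition subspace_mx (S : set V) : 'M[R]_n :=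
  xget 0 [set B : 'M[R]_n | forall v, S v <-> (v <= B)%MS].
Definition compl_space (S : set V) : set V :=
  [set x | (x <= (subspace_mx S)^C)%MS].
Definition proj_subspace (S : set V) : 'M[R]_n :=
  proj_mx (subspace_mx S) (subspace_mx S)^C%MS.
Definition proj_compl (S : set V) : 'M[R]_n := 1%:M - proj_subspace S.

Lemma subspace_mxP S : is_subspace S -> forall v, S v <-> (v <= subspace_mx S)%MS.
Proof. by move=> SB; exact: (xgetPex 0 SB). Qed.

Lemma proj_subspaceP S (x : V) : is_subspace S -> S (x *m proj_subspace S).
Proof. by move=> SB; apply/(subspace_mxP SB); exact: proj_mx_sub. Qed.

Lemma mulmx_proj_compl S (x : V) : x *m proj_compl S = x - x *m proj_subspace S.
Proof. by rewrite mulmxBr mulmx1. Qed.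

Lemma proj_complP S (x : V) : compl_space S (x *m proj_compl S).
Proof.
rewrite mulmx_proj_compl /compl_space /=; apply: proj_mx_compl_sub.
exact: submx_full (addsmx_compl_full _).
Qed.

Lemma proj_compl_id S (x : V) : compl_space S x -> x *m proj_compl S = x.
Proof.
by move=> Wx; rewrite mulmx_proj_compl proj_mx_0 ?subr0 //; exact: capmx_compl.
Qed.

Lemma subspace_compl0 S (v : V) : is_subspace S -> S v -> compl_space S v -> v = 0.
Proof.
move=> SB Sv Wv; apply/eqP; rewrite -submx0 -(capmx_compl (subspace_mx S)) sub_capmx.
by apply/andP; split; [apply/(subspace_mxP SB)|].
Qed.

Lemma polyhedron_compl_space S : polyhedron (compl_space S).
Proof.
have -> : compl_space S = [set x | x *m cokermx (subspace_mx S)^C%MS = 0].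
  by apply/seteqP; split => x; rewrite /compl_space /= submxE; [move/eqP|move->].
exact: polyhedron_kernel.
Qed.

Definition slice (P : set V) : set V := P `&` compl_space (lineality P).

Lemma proj_compl_lineality (P : set V) x :
  polyhedron P -> P (x *m proj_compl (lineality P)) = P x.
Proof.
move=> pP; rewrite mulmx_proj_compl lineality_translate //.
exact: proj_subspaceP (lineality_subspace pP).
Qed.

Lemma slice_proj_compl (P : set V) x :
  polyhedron P -> P x -> slice P (x *m proj_compl (lineality P)).
Proof. by move=> pP Px; split; [rewrite proj_compl_lineality|exact: proj_complP]. Qed.

Lemma slice_polyhedron (P : set V) : polyhedron P -> polyhedron (slice P).
Proof. by move=> pP; apply: polyhedronI => //; exact: polyhedron_compl_space. Qed.

Lemma slice_no_line (P : set V) : polyhedron P -> ~ contains_line (slice P).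
Proof.
move=> pP [x [v [v0 line]]].
have Lv : lineality P v.
  by apply: (lineality_of_line (x0 := x)) => // t; case: (line t).
have Wv : compl_space (lineality P) v.
  have [_ Wx1] := line 1; have [_ Wx0] := line 0.
  rewrite scale1r in Wx1; rewrite scale0r addr0 in Wx0.
  by rewrite /compl_space /= -(addKr x v) addmx_sub // eqmx_opp.
by move/eqP: v0; apply; exact: subspace_compl0 (lineality_subspace pP) Lv Wv.
Qed.

End Polyhedra.

Section Pasting.
Variables (T U : topologicalType).

Lemma within_big_setU_continuous (I : eqType) (C : I -> set T) (f : T -> U)
    (s : seq I) :
  (forall i, i \in s -> closed (C i) /\ {within C i, continuous f}) ->
  {within \big[setU/set0]_(i <- s) C i, continuous f}.
Proof.
elim: s => [|i s IH] H; first by rewrite big_nil; exact: continuous_subspace0.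
have [cCi fCi] := H i (mem_head _ _).
have Hs j : j \in s -> closed (C j) /\ {within C j, continuous f}.
  by move=> js; apply: H; rewrite inE js orbT.
rewrite big_cons; apply: withinU_continuous => //; last exact: IH.
by apply: closed_bigsetU => j /Hs [].
Qed.

Lemma piecewise_continuous (I : choiceType) (A : set I) (C : I -> set T)
    (f : T -> U) (g : I -> T -> U) :
  finite_set A -> (forall i, A i -> closed (C i)) ->
  (forall i, A i -> continuous (g i)) ->
  (forall i x, A i -> C i x -> f x = g i x) ->
  {within \bigcup_(i in A) C i, continuous f}.
Proof.
move=> finA cC cg fg; rewrite -bigsetU_fset_set //.
apply: within_big_setU_continuous => i; rewrite in_fset_set // in_setE => Ai.
split; first exact: cC.
apply: (@subspace_eq_continuous _ _ _ (g i)); last exact/continuous_subspaceT/cg.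
by move=> x; rewrite in_setE => Cx; rewrite /from_subspace (fg i).
Qed.

Lemma closed_setX (A : set T) (B : set U) : closed A -> closed B -> closed (A `*` B).
Proof.
move=> cA cB; have -> : A `*` B = (fst @^-1` A) `&` (snd @^-1` B) by [].
by apply: closedI; apply: (continuous_closedP _).1 => // [[x y]];
  [exact: cvg_fst|exact: cvg_snd].
Qed.

End Pasting.

Section PolyhedraTopology.
Variables (R : realType) (n : nat).
Local Notation V := 'rV[R]_n.

Lemma continuous_dotp (a : V) : continuous (dotp a).
Proof.
apply: continuous_big => [|i _ x]; first exact: add_continuous.
have := @continuousM R _ (fun=> a ord0 i) (fun y : V => y ord0 i) x.
by apply; [exact: cst_continuous|exact: (@coord_continuous R 1 n ord0 i)].
Qed.

Lemma continuous_mulmx (M : 'M[R]_n) : continuous (fun x : V => x *m M).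
Proof.
under eq_fun do rewrite mulmx_sum_row.
apply: continuous_big => [|i _ x]; first exact: add_continuous.
by apply: continuousZr_tmp; exact: coord_continuous.
Qed.

Lemma closed_polyhedron (P : set V) : polyhedron P -> closed P.
Proof.
case=> m [a [b ->]].
have -> : [set x | forall i, dotp (a i) x <= b i] =
    \bigcap_(i in setT) (dotp (a i) @^-1` [set y | y <= b i]).
  by apply/seteqP; split => x /= H i; [move=> _|]; apply: H.
apply: closed_bigI => i _; apply: (continuous_closedP _).1; last exact: closed_le.
exact: continuous_dotp.
Qed.

Lemma deformation_retract_homotopy_equivalent (A B : set V) (r : V -> V) :
  B `<=` A -> {within A, continuous r} -> (forall x, A x -> B (r x)) ->
  (forall y, B y -> r y = y) -> homotopic_on A A r id ->
  homotopy_equivalent A B.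
Proof.
move=> BA cr rAB rB hr; exists r, id; split => //.
  by split=> //; apply: continuous_subspaceT => x; exact: cvg_id.
exists snd; split; [|split; [|split]] => //.
- by apply: continuous_subspaceT => x; exact: cvg_snd.
- by move=> x Bx /=; rewrite rB.
Qed.

End PolyhedraTopology.

Section Complex.
Variables (R : realType) (n : nat) (K : set (set 'rV[R]_n)).
Local Notation V := 'rV[R]_n.
Hypothesis hK : polyhedral_complex K.

Let K' := [set slice P | P in K].

Lemma cell_polyhedron P : K P -> polyhedron P.
Proof. by case: hK => _ H _ _ /H []. Qed.

Lemma cell_nonempty P : K P -> P !=set0.
Proof. by case: hK => _ H _ _ /H []. Qed.

Lemma lineality_meet P Q x : K P -> K Q -> P x -> Q x -> lineality P = lineality Q.
Proof.
move=> KP KQ Px Qx; case: hK => _ _ _ /(_ P Q KP KQ) [PQ0|[fP fQ]].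
  by have : (P `&` Q) x by []; rewrite PQ0.
rewrite -(lineality_face (cell_polyhedron KP) fP).
exact: lineality_face (cell_polyhedron KQ) fQ.
Qed.

Lemma slice_nonempty P : K P -> slice P !=set0.
Proof.
move=> KP; have [x Px] := cell_nonempty KP.
exists (x *m proj_compl (lineality P)).
exact: slice_proj_compl (cell_polyhedron KP) Px.
Qed.

Lemma slice_inj : {in K &, injective (@slice R n)}.
Proof.
have sub P Q : K P -> K Q -> slice P = slice Q -> P `<=` Q.
  move=> KP KQ ePQ y Py; have [z Pz] := slice_nonempty KP.
  have Qz : slice Q z by rewrite -ePQ.
  have := slice_proj_compl (cell_polyhedron KP) Py.
  rewrite ePQ (lineality_meet KP KQ Pz.1 Qz.1) => -[Qy _].
  by rewrite -(proj_compl_lineality _ (cell_polyhedron KQ)).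
move=> P Q; rewrite !inE => KP KQ ePQ.
by apply/seteqP; split; apply: sub.
Qed.

Lemma slice_face_cell P G : K P -> face_of G (slice P) -> K' G.
Proof.
move=> KP [[g0 Gg0] [c [d [valid GE]]]].
have pP := cell_polyhedron KP.
(* [G] is cut out of [slice P] by [c.x = d], and the matching face of [P] by
   [c'.x = d], where [c'] pulls [c] back along the projection onto the slice. *)
set S := lineality P; set c' := c *m (proj_compl S)^T.
have c'E x : dotp c' x = dotp c (x *m proj_compl S) by rewrite dotp_mulmx.
set F := P `&` [set x | dotp c' x = d].
have [[Pg0 Wg0] cg0] : (slice P `&` [set x | dotp c x = d]) g0 by rewrite -GE.
have fF : face_of F P.
  split; first by exists g0; split; rewrite //= c'E proj_compl_id.
  exists c', d; split => // x Px.
  by rewrite c'E; apply: valid; exact: slice_proj_compl.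
have KF : K F by case: hK => _ _ /(_ P F KP fF).
exists F => //; rewrite GE /slice (lineality_face pP fF) -/S.
apply/seteqP; split => x /=.
  by case=> [[Px cx] Wx]; split; [split|rewrite -(proj_compl_id Wx) -c'E].
by case=> [[Px Wx] cx]; split => //; split => //=; rewrite c'E proj_compl_id.
Qed.

Lemma slice_meet P Q : K P -> K Q ->
  slice P `&` slice Q = set0 \/
  (face_of (slice P `&` slice Q) (slice P) /\ face_of (slice P `&` slice Q) (slice Q)).
Proof.
move=> KP KQ; case: hK => _ _ _ /(_ P Q KP KQ) [PQ0|[fP fQ]].
  left; apply/seteqP; split => // x [[Px _] [Qx _]].
  by have : (P `&` Q) x by []; rewrite PQ0.
have [x0 [Px0 Qx0]] := fP.1.
have LPQ := lineality_meet KP KQ Px0 Qx0.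
have E : slice P `&` slice Q = (P `&` Q) `&` compl_space (lineality P).
  by rewrite /slice -LPQ; apply/seteqP; split => x /=; tauto.
have ne : (P `&` Q) `&` compl_space (lineality P) !=set0.
  exists (x0 *m proj_compl (lineality P)); split; last exact: proj_complP.
  split; first by rewrite (proj_compl_lineality _ (cell_polyhedron KP)).
  by rewrite LPQ (proj_compl_lineality _ (cell_polyhedron KQ)).
by right; rewrite E /slice -LPQ; split; exact: face_ofI.
Qed.

Lemma polyhedral_complex_slice : polyhedral_complex K'.
Proof.
split.
- by case: hK => finK _ _ _; exact: finite_image.
- move=> _ [P KP <-]; split; last exact: slice_nonempty.
  exact: slice_polyhedron (cell_polyhedron KP).
- by move=> _ G [P KP <-]; exact: slice_face_cell.
- by move=> _ _ [P KP <-] [Q KQ <-]; exact: slice_meet.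
Qed.

Lemma card_eq_slice : card_eq K K'.
Proof. by rewrite card_eq_sym; exact: inj_card_eq slice_inj. Qed.

Definition point_lineality (x : V) : set V :=
  [set v | forall P, K P -> P x -> lineality P v].

Lemma point_linealityE P x : K P -> P x -> point_lineality x = lineality P.
Proof.
move=> KP Px; apply/seteqP; split => v Lv; first exact: Lv.
by move=> Q KQ Qx; rewrite (lineality_meet KQ KP Qx Px).
Qed.

Definition retraction (x : V) : V := x *m proj_compl (point_lineality x).

Definition retraction_homotopy (p : R * V) : V :=
  p.2 - (1 - p.1) *: (p.2 *m proj_subspace (point_lineality p.2)).

Lemma underlying_slice_sub : underlying K' `<=` underlying K.
Proof. by move=> y [_ [P KP <-] [Py _]]; exists P. Qed.

Lemma retraction_slice x : underlying K x -> underlying K' (retraction x).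
Proof.
move=> [P KP Px]; exists (slice P); first by exists P.
rewrite /retraction (point_linealityE KP Px).
exact: slice_proj_compl (cell_polyhedron KP) Px.
Qed.

Lemma retraction_id y : underlying K' y -> retraction y = y.
Proof.
move=> [_ [P KP <-] [Py Wy]].
by rewrite /retraction (point_linealityE KP Py) proj_compl_id.
Qed.

Lemma continuous_retraction : {within underlying K, continuous retraction}.
Proof.
have [finK _ _ _] := hK.
apply: (@piecewise_continuous _ _ _ K id _
  (fun P x => x *m proj_compl (lineality P))) => //.
- by move=> P KP; exact: closed_polyhedron (cell_polyhedron KP).
- by move=> P _; exact: continuous_mulmx.
- by move=> P x KP Px; rewrite /retraction (point_linealityE KP Px).
Qed.

Lemma continuous_retraction_homotopy :
  {within `[0, 1] `*` underlying K, continuous retraction_homotopy}.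
Proof.
have [finK _ _ _] := hK.
have -> : `[0, 1] `*` underlying K = \bigcup_(P in K) (`[0, 1] `*` P) :> set (R * V).
  apply/seteqP; split => -[t x] /=; first by case=> t01 [P KP Px]; exists P.
  by case=> P KP [t01 Px]; split => //; exists P.
apply: (@piecewise_continuous _ _ _ K (fun P => @setX R V `[0, 1] P) _
  (fun P p => p.2 - (1 - p.1) *: (p.2 *m proj_subspace (lineality P)))) => //.
- move=> P KP; apply: closed_setX; first exact: interval_closed.
  exact: closed_polyhedron (cell_polyhedron KP).
- move=> P _ p; apply: continuousB; first exact: cvg_snd.
  apply: continuousZ; first by apply: continuousB; [exact: cst_continuous|exact: cvg_fst].
  apply: (@continuous_comp _ _ _ snd (fun x : V => x *m _)); first exact: cvg_snd.
  exact: continuous_mulmx.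
- by move=> P [t x] KP [_ Px]; rewrite /retraction_homotopy /= (point_linealityE KP Px).
Qed.

Lemma homotopic_retraction_id :
  homotopic_on (underlying K) (underlying K) retraction id.
Proof.
exists retraction_homotopy; split; [|split; [|split]].
- exact: continuous_retraction_homotopy.
- move=> t x _ [P KP Px]; exists P => //.
  rewrite /retraction_homotopy /= (point_linealityE KP Px) -scaleNr.
  exact: (proj_subspaceP _ (lineality_subspace (cell_polyhedron KP))).
- by move=> x _; rewrite /retraction_homotopy /= subr0 scale1r -mulmx_proj_compl.
- by move=> x _; rewrite /retraction_homotopy /= subrr scale0r subr0.
Qed.

End Complex.

Theorem lemma4p5 (R : realType) (n : nat) (K : set (set 'rV[R]_n)) :
  polyhedral_complex K ->
  exists K' : set (set 'rV[R]_n),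
    [/\ polyhedral_complex K',
        (forall C, K' C -> ~ contains_line C),
        homotopy_equivalent (underlying K) (underlying K') &
        card_eq K K'].
Proof.
move=> hK; exists [set slice P | P in K]; split.
- exact: polyhedral_complex_slice.
- by move=> _ [P KP <-]; exact: slice_no_line (cell_polyhedron hK KP).
- apply: (deformation_retract_homotopy_equivalent (r := retraction K)).
  + exact: underlying_slice_sub.
  + exact: continuous_retraction.
  + exact: retraction_slice.
  + exact: retraction_id.
  + exact: homotopic_retraction_id.
- exact: card_eq_slice.
Qed.
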